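(* For every $n \geqslant 2$ there exists a direction-determinate 2DFA with $n$ states which accepts at least one string and whose shortest accepted string has length exactly $\binom{n}{\lfloor n/2 \rfloor} - 1$.
   Context: A two-way deterministic finite automaton (2DFA) is a quintuple $(\Sigma, Q, q_0, \delta, F)$ where $\Sigma$ is a finite alphabet not containing the end-markers $\vdash$ and $\dashv$, $Q$ is a finite set of states, $q_0 \in Q$ is the initial state, $\delta: Q \times (\Sigma \cup \{\vdash, \dashv\}) \to Q \times \{-1,+1\}$ is a partial transition function, and $F \subseteq Q$ is the set of accepting states. On input $w = a_1 \cdots a_m \in \Sigma^*$ the automaton works on the tape $\vdash a_1 \cdots a_m \dashv$, starting at $\vdash$ in state $q_0$; in state $q$ reading symbol $c$, if $\delta(q,c) = (r,d)$ it enters state $r$ and moves one cell in direction $d$ ($-1$ left, $+1$ right); if $\delta(q,c)$ is undefined it rejects. It accepts $w$ if it ever arrives at $\dashv$ in a state from $F$; it may also loop forever (not accepting). The number of states of the automaton is $|Q|$. A 2DFA is direction-determinate if there is a partition $Q = Q^+ \cup Q^-$, $Q^+ \cap Q^- = \emptyset$, such that every transition $\delta(q,c) = (r,+1)$ has $r \in Q^+$ and every transition $\delta(q,c) = (r,-1)$ has $r \in Q^-$. *)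

From mathcomp Require Import all_boot.
Set Implicit Arguments. Unset Strict Implicit. Unset Printing Implicit Defensive.

Inductive sym (Sigma : Type) : Type :=
  | LEnd : sym Sigma
  | REnd : sym Sigma
  | Letter : Sigma -> sym Sigma.
Arguments LEnd {Sigma}. Arguments REnd {Sigma}.

(* A 2DFA over alphabet Sigma with state set Q.  Directions: true = +1, false = -1.
   delta is partial (None = undefined, i.e. reject). *)
Record dfa2 (Sigma : finType) (Q : finType) := DFA2 {
  init : Q;
  delta : Q -> sym Sigma -> option (Q * bool);
  final : pred Q
}.

Section Run.
Variables (Sigma Q : finType) (A : dfa2 Sigma Q).

Definition tape (w : seq Sigma) (i : nat) : option (sym Sigma) :=
  if i == 0 then Some LEnd
  else if i == (size w).+1 then Some REnd
  else omap (@Letter Sigma) (onth w i.-1).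

Definition step (w : seq Sigma) (c : Q * nat) : option (Q * nat) :=
  let: (q, i) := c in
  match tape w i with
  | None => None
  | Some s =>
    match delta A q s with
    | None => None
    | Some (r, d) => if d then Some (r, i.+1)
                     else if i == 0 then None else Some (r, i.-1)
    end
  end.

Fixpoint run (w : seq Sigma) (k : nat) : option (Q * nat) :=
  match k with
  | 0 => Some (init A, 0)
  | k.+1 => obind (step w) (run w k)
  end.

Definition accepts (w : seq Sigma) : Prop :=
  exists k q, run w k = Some (q, (size w).+1) /\ q \in final A.

End Run.

(* Direction-determinate: a partition Q = Q+ (P) ∪ Q- (~~ P) such that every
   right move enters Q+ and every left move enters Q-. *)
Definition direction_determinate (Sigma Q : finType) (A : dfa2 Sigma Q) : Prop :=
  exists P : pred Q, forall q s r d, delta A q s = Some (r, d) -> P r = d.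

From mathcomp Require Import all_boot all_order zify.
Set Implicit Arguments. Unset Strict Implicit. Unset Printing Implicit Defensive.
Import Order.TTheory DefaultSeqLexiOrder.

(* Split the states into Q+ = {0, ..., n/2} and Q- = {n/2 + 1, ..., n - 1}.  A set T of
   n/2 states is encoded by its key a_0 b_0 a_1 b_1 ... a_k, where a_0 < ... < a_k are the
   Q+ states outside T and b_0 > ... > b_(k-1) the Q- states inside T; distinct middle
   sets have distinct keys, so the lexicographic rank of keys enumerates all
   'C(n, n/2) of them.  On the letter (T, T') the automaton zigzags: a_j goes left to
   b_j, b'_j goes right to a'_(j+1), and a_k goes right to a'_0; the letter is usable
   only when rank T' <= rank T + 1.
   In an accepting computation, the Q+ states visited just right of a boundary and the
   Q- states visited just left of it form a key.  Reading one letter (T, T') this key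
   can only go from above key T to below key T', so its rank grows by at most one per
   cell, from 0 at the left end-marker to 'C(n, n/2) - 1 at the right one.  The word of
   consecutive pairs (T_j, T_(j+1)) of ranked middle sets attains this bound. *)

(** * Interleavings and the lexicographic order *)

Fixpoint interleave {T : Type} (s t : seq T) : seq T :=
  match s, t with
  | x :: s', y :: t' => x :: y :: interleave s' t'
  | x :: _, [::] => [:: x]
  | [::], _ => [::]
  end.

Lemma interleave_inj (T : Type) (s t s' t' : seq T) :
  size s = (size t).+1 -> size s' = (size t').+1 ->
  interleave s t = interleave s' t' -> s = s' /\ t = t'.
Proof.
elim: t s s' t' => [|y t IH] [|x s] [|x' s'] [|y' t'] //=.
- by move=> szs szs' [<-]; case: s szs => // _; case: s' szs'.
- by move=> [szs] [szs'] [-> -> e]; have [-> ->] := IH _ _ _ szs szs' e.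
Qed.

Section InterleaveOrder.
Context {disp : Order.disp_t} {T : orderType disp}.
Implicit Types (x y : T) (s t : seq T).

Lemma lexi_cons_lt x y s t : (x < y)%O -> (x :: s <= y :: t)%O.
Proof. by move=> xy; rewrite lexi_cons (ltW xy) lt_geF. Qed.

Lemma interleave_le_mask_pairs (A B : seq T) (m : bitseq) :
  sorted <%O A -> sorted >%O B -> size A = (size B).+1 -> size m = size B ->
  (interleave A B <= interleave (mask (rcons m true) A) (mask m B))%O.
Proof.
elim: B A m => [|b B IH] [|a A] [|c m] //.
move=> sortA /path_sorted sortB [szA] [szm].
case: c => /=; first by rewrite !lexi_cons !lexx /= IH ?(path_sorted sortA).
have : mask (rcons m true) A != [::].
  by rewrite -size_eq0 size_mask ?size_rcons ?szA ?szm // -cats1 count_cat addn1.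
case eM: (mask (rcons m true) A) => [|a' M] // _.
have a'A : a' \in A by rewrite (mem_mask (m := rcons m true)) // eM mem_head.
have aa' : (a < a')%O by move: sortA => /=; rewrite lt_path_sortedE => /andP[/allP->].
by case: (mask m B) => [|y Y] /=; apply: lexi_cons_lt.
Qed.

Lemma interleave_mask_pairs_le (a : T) (A B : seq T) (m : bitseq) :
  sorted <%O (a :: A) -> sorted >%O B -> size A = size B -> size m = size B ->
  (interleave (a :: mask m A) (mask m B) <= interleave (a :: A) B)%O.
Proof.
elim: B a A m => [|b B IH] a [|a' A] [|c m] //.
move=> /andP[_ sortA] sortB [szA] [szm].
case: c => /=; first by rewrite !lexi_cons !lexx /= IH ?(path_sorted sortB).
case eM: (mask m B) => [|y Y]; rewrite /= lexi_cons lexx //=.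
have yB : y \in B by rewrite (mem_mask (m := m)) // eM mem_head.
apply: lexi_cons_lt; move: sortB => /(order_path_min (rev_trans lt_trans)).
by move=> /allP/(_ _ yB).
Qed.

End InterleaveOrder.

(** * Keys of the middle layer of the Boolean lattice *)

Lemma half_ltn m : 0 < m -> m./2 < m.
Proof. by move=> m_gt0; rewrite ltn_half_double -addnn; lia. Qed.

Lemma sorted_enum_ord n : sorted <%O (enum 'I_n).
Proof. by have := iota_ltn_sorted 0 n; rewrite -val_enum_ord sorted_map. Qed.

Lemma size_filter_enum (T : finType) (p : pred T) :
  size [seq x <- enum T | p x] = #|[set x | p x]|.
Proof. by rewrite enumT cardsE cardE /enum_mem. Qed.

Section MiddleLayer.
Variable n : nat.
Hypothesis n_gt0 : 0 < n.

Definition qplus (x : 'I_n) : bool := x <= n./2.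

Definition Qplus : {set 'I_n} := [set x | qplus x].

Definition top : 'I_n := Ordinal (half_ltn n_gt0).

Definition plus_states (p : pred 'I_n) : seq 'I_n :=
  [seq x <- enum 'I_n | qplus x && p x].

Definition minus_states (p : pred 'I_n) : seq 'I_n :=
  rev [seq x <- enum 'I_n | ~~ qplus x && p x].

Definition plus_out (T : {set 'I_n}) : seq 'I_n := plus_states (mem (~: T)).

Definition minus_in (T : {set 'I_n}) : seq 'I_n := minus_states (mem T).

Definition key (T : {set 'I_n}) : seq 'I_n := interleave (plus_out T) (minus_in T).

Definition middle (T : {set 'I_n}) : bool := #|T| == n./2.

Definition rank (s : seq 'I_n) : nat := #|[set T | middle T & (key T < s)%O]|.

Lemma mem_plus_states p x : (x \in plus_states p) = qplus x && p x.
Proof. by rewrite mem_filter mem_enum andbT. Qed.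

Lemma mem_minus_states p x : (x \in minus_states p) = ~~ qplus x && p x.
Proof. by rewrite mem_rev mem_filter mem_enum andbT. Qed.

Lemma uniq_plus_states p : uniq (plus_states p).
Proof. by rewrite filter_uniq ?enum_uniq. Qed.

Lemma uniq_minus_states p : uniq (minus_states p).
Proof. by rewrite rev_uniq filter_uniq ?enum_uniq. Qed.

Lemma sorted_plus_states p : sorted <%O (plus_states p).
Proof. exact/lt_sorted_filter/sorted_enum_ord. Qed.

Lemma sorted_minus_states p : sorted >%O (minus_states p).
Proof. by rewrite rev_sorted; apply/lt_sorted_filter/sorted_enum_ord. Qed.

Lemma qplus_top : qplus top.
Proof. exact: leqnn. Qed.

Lemma card_Qplus : #|Qplus| = n./2.+1.
Proof.
have le_h_n : n./2.+1 <= n := half_ltn n_gt0.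
have -> : Qplus = [set widen_ord le_h_n i | i in 'I_n./2.+1].
  apply/setP => x; rewrite inE; apply/idP/imsetP => [x_le | [i _ ->]].
    by exists (Ordinal (x_le : x < n./2.+1)) => //; apply: val_inj.
  exact: ltn_ord i.
rewrite card_imset ?card_ord // => i j /(congr1 val) ij; exact: val_inj.
Qed.

Lemma size_plus_out T : size (plus_out T) = #|Qplus :\: T|.
Proof. by rewrite size_filter_enum; apply: eq_card => x; rewrite !inE andbC. Qed.

Lemma size_minus_in T : size (minus_in T) = #|T :\: Qplus|.
Proof. by rewrite size_rev size_filter_enum; apply: eq_card => x; rewrite !inE. Qed.

Lemma size_plus_out_middle T : middle T -> size (plus_out T) = (size (minus_in T)).+1.
Proof.
move=> /eqP card_T; rewrite size_plus_out size_minus_in.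
have := cardsID Qplus T; have := cardsID T Qplus; rewrite setIC card_Qplus card_T.
lia.
Qed.

Lemma size_minus_in_lt T : middle T -> size (minus_in T) < size (plus_out T).
Proof. by move=> mT; rewrite size_plus_out_middle. Qed.

Lemma size_plus_out_gt0 T : middle T -> 0 < size (plus_out T).
Proof. by move=> mT; rewrite size_plus_out_middle. Qed.

Lemma key_inj T T' : middle T -> middle T' -> key T = key T' -> T = T'.
Proof.
move=> mT mT' /interleave_inj.
case/(_ (size_plus_out_middle mT) (size_plus_out_middle mT')) => eA eB.
apply/setP => x; move: (congr1 (fun s => x \in s) eA) (congr1 (fun s => x \in s) eB).
rewrite !mem_plus_states !mem_minus_states !inE.
by case: (qplus x) => /= [/negb_inj ->|_ ->].
Qed.

Lemma rank_le s t : (s <= t)%O -> rank s <= rank t.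
Proof.
move=> le_st; apply/subset_leq_card/subsetP => T; rewrite !inE.
by case/andP=> -> /lt_le_trans; apply.
Qed.

Lemma rank_key_lt_rank T s : middle T -> (key T < s)%O -> rank (key T) < rank s.
Proof.
move=> mT lt_s; apply/proper_card/properP; split.
  apply/subsetP => U; rewrite !inE => /andP[-> /lt_trans]; exact.
by exists T; rewrite !inE mT ?ltxx.
Qed.

Definition middle_sets : {set {set 'I_n}} := [set T | middle T].

Lemma card_middle_sets : #|middle_sets| = 'C(n, n./2).
Proof. by rewrite card_draws card_ord. Qed.

Lemma rank_key_lt T : middle T -> rank (key T) < 'C(n, n./2).
Proof.
move=> mT; rewrite -card_middle_sets (cardsD1 T) inE mT add1n ltnS.
apply/subset_leq_card/subsetP => U; rewrite !inE => /andP[-> lt_UT].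
by rewrite andbT; apply: contraTneq lt_UT => ->; rewrite ltxx.
Qed.

Lemma rank_key_inj T T' :
  middle T -> middle T' -> rank (key T) = rank (key T') -> T = T'.
Proof.
move=> mT mT' e; apply: key_inj => //.
by case: (ltgtP (key T) (key T')) => // /rank_key_lt_rank => [/(_ mT)|/(_ mT')]; rewrite e ltnn.
Qed.

Lemma rank_key_surj j : j < 'C(n, n./2) -> exists2 T, middle T & rank (key T) = j.
Proof.
move=> lt_j; pose ranks := [seq rank (key T) | T <- enum middle_sets].
have uniq_ranks : uniq ranks.
  by rewrite map_inj_in_uniq ?enum_uniq // => T U; rewrite !mem_enum !inE; apply: rank_key_inj.
have ranks_sub : {subset ranks <= iota 0 'C(n, n./2)}.
  by move=> x /mapP[T]; rewrite mem_enum inE => mT ->; rewrite mem_iota rank_key_lt.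
have size_ranks : size (iota 0 'C(n, n./2)) <= size ranks.
  by rewrite size_iota size_map -cardE card_middle_sets.
have [_ ranks_eq] := uniq_min_size uniq_ranks ranks_sub size_ranks.
have /mapP[T] : j \in ranks by rewrite ranks_eq mem_iota.
by rewrite mem_enum inE => mT ->; exists T.
Qed.

Lemma binomial_half_gt0 : 0 < 'C(n, n./2).
Proof. by rewrite bin_gt0 ltnW // half_ltn. Qed.

Definition middle_of_rank (j : nat) : {set 'I_n} :=
  odflt set0 [pick T | middle T && (rank (key T) == j)].

Lemma middle_of_rankP j : j < 'C(n, n./2) ->
  middle (middle_of_rank j) /\ rank (key (middle_of_rank j)) = j.
Proof.
case/rank_key_surj=> T mT rT; rewrite /middle_of_rank.
case: pickP => [U /andP[mU /eqP rU] | /(_ T)] //=.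
by rewrite mT rT eqxx.
Qed.

Lemma middle_Qplus_del a : qplus a -> middle (Qplus :\ a).
Proof.
by move=> qa; apply/eqP; have := cardsD1 a Qplus; rewrite card_Qplus inE qa => -[].
Qed.

Lemma plus_states_pred1 a (p : pred 'I_n) : qplus a ->
  (forall x, qplus x -> p x = (x == a)) -> plus_states p = [:: a].
Proof.
move=> qa pE; rewrite -(filter_pred1_uniq (enum_uniq 'I_n) (mem_enum _ a)).
apply: eq_filter => x /=; case: (boolP (qplus x)) => [/pE -> // | nqx].
by apply/esym/negbTE; apply: contraNneq nqx => ->.
Qed.

Lemma minus_states_pred0 (p : pred 'I_n) :
  (forall x, ~~ qplus x -> p x = false) -> minus_states p = [::].
Proof.
move=> pF; rewrite /minus_states (@eq_filter _ _ pred0) ?filter_pred0 // => x /=.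
by case: (boolP (qplus x)) => // /pF.
Qed.

Lemma plus_states_filter T (p : pred 'I_n) :
  (forall x, qplus x -> p x -> x \in plus_out T) -> plus_states p = filter p (plus_out T).
Proof.
move=> p_sub; rewrite -filter_predI; apply: eq_filter => x /=.
case: (boolP (p x)) => [px | _]; rewrite ?andbF // andbT.
case: (boolP (qplus x)) => // /p_sub/(_ px).
by rewrite mem_plus_states => /andP[_ xT]; apply/esym.
Qed.

Lemma minus_states_filter T (p : pred 'I_n) :
  (forall x, ~~ qplus x -> p x -> x \in minus_in T) -> minus_states p = filter p (minus_in T).
Proof.
move=> p_sub; rewrite filter_rev -filter_predI; congr rev; apply: eq_filter => x /=.
case: (boolP (p x)) => [px | _]; rewrite ?andbF // andbT.
case: (boolP (qplus x)) => // /p_sub/(_ px).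
by rewrite mem_minus_states => /andP[_ xT]; apply/esym.
Qed.

Lemma plus_out_Qplus_del a : qplus a -> plus_out (Qplus :\ a) = [:: a].
Proof.
move=> qa; apply: plus_states_pred1 => // x qx.
by change ((x \in ~: (Qplus :\ a)) = (x == a)); rewrite !inE qx negb_and negbK orbF.
Qed.

Lemma minus_in_Qplus_del a : minus_in (Qplus :\ a) = [::].
Proof.
apply: minus_states_pred0 => x nqx.
by change ((x \in Qplus :\ a) = false); rewrite !inE (negbTE nqx) andbF.
Qed.

Lemma key_Qplus_del a : qplus a -> key (Qplus :\ a) = [:: a].
Proof. by move=> qa; rewrite /key plus_out_Qplus_del ?minus_in_Qplus_del. Qed.

Lemma key_ge_top T : middle T -> ([:: top] <= key T)%O -> T = Qplus :\ top.
Proof.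
move=> mT top_le; apply: key_inj; rewrite ?middle_Qplus_del ?key_Qplus_del ?qplus_top //.
have le_top x : x \in plus_out T -> (x <= top)%O by rewrite mem_plus_states => /andP[].
have sorted_A : sorted <%O (plus_out T) := sorted_plus_states _.
move: (size_plus_out_middle mT) sorted_A le_top top_le.
rewrite /key; case: (plus_out T) => [|a [|a' A]]; case: (minus_in T) => [|b B] //= _.
  move=> _ le_top /lexi_lehead top_a.
  by rewrite (@le_anti _ _ a top) ?top_a ?le_top ?mem_head.
move=> /andP[lt_aa' _] le_top /lexi_lehead top_a.
have := lt_le_trans (le_lt_trans top_a lt_aa') (le_top a' _).
by rewrite ltxx !inE eqxx orbT => /(_ isT).
Qed.

Lemma rank_top : 'C(n, n./2).-1 <= rank [:: top].
Proof.
rewrite -card_middle_sets (cardsD1 (Qplus :\ top)) inE middle_Qplus_del ?qplus_top //=.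
apply/subset_leq_card/subsetP => T; rewrite !inE => /andP[not_top mT]; rewrite mT ltNge.
by apply: contra not_top => /(key_ge_top mT) ->.
Qed.

Lemma minus_in_rank0 T : middle T -> rank (key T) = 0 -> minus_in T = [::].
Proof.
move=> mT rank0; move: (size_plus_out_middle mT).
case eA: (plus_out T) => [|a A] //; case eB: (minus_in T) => [|b B] // _.
have qa : qplus a by move: (mem_head a A); rewrite -eA mem_plus_states => /andP[].
have := rank_key_lt_rank (middle_Qplus_del qa) (s := key T).
by rewrite rank0 key_Qplus_del // /key eA eB ltxi_cons lexx => /(_ isT).
Qed.

End MiddleLayer.

(** * Runs of direction-determinate automata *)

Lemma tape_nth (Sigma : finType) (w : seq Sigma) c0 i :
  i < size w -> tape w i.+1 = Some (Letter (nth c0 w i)).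
Proof. by move=> lt_iw; rewrite /tape /= eqSS (ltn_eqF lt_iw) onthE (nth_map c0). Qed.

Section AcceptingRun.
Variables (Sigma Q : finType) (D : dfa2 Sigma Q) (P : pred Q).
Hypothesis D_dir : forall q s r d, delta D q s = Some (r, d) -> P r = d.
Hypothesis P_init : P (init D).
Variable w : seq Sigma.

Lemma stepP q i r j : step D w (q, i) = Some (r, j) ->
  exists2 s, tape w i = Some s &
    [/\ delta D q s = Some (r, P r), j = (if P r then i.+1 else i.-1) & P r || (0 < i)].
Proof.
rewrite /step; case: (tape w i) => // s.
case eq_d: (delta D q s) => [[r' d]|] // step_eq; exists s => //.
have Pr' := D_dir eq_d.
case: d Pr' eq_d step_eq => Pr' eq_d; last case: eqP => // /eqP i_neq0;
  by case=> <- <-; rewrite Pr' eq_d ?lt0n.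
Qed.

Lemma run_succ t c : run D w t = Some c -> run D w t.+1 = step D w c.
Proof. by move=> /= ->. Qed.

Lemma run_pred t r j : run D w t.+1 = Some (r, j) ->
  exists s i, run D w t = Some (s, i) /\ step D w (s, i) = Some (r, j).
Proof. by rewrite /=; case: (run D w t) => // [[s i]] /= h; exists s, i. Qed.

Lemma run_defined t t' c : run D w t' = Some c -> t <= t' -> exists c0, run D w t = Some c0.
Proof.
move=> run_t' le_tt'; case eq_t: (run D w t) => [c0|]; first by exists c0.
suff : run D w t' = None by rewrite run_t'.
by rewrite -(subnKC le_tt'); elim: (t' - t) => [|k IH]; rewrite ?addn0 ?addnS //= IH.
Qed.

Variables (K : nat) (f : Q).
Hypothesis run_K : run D w K = Some (f, (size w).+1).

Definition visited (q : Q) (i : nat) : bool := [exists t : 'I_K.+1, run D w t == Some (q, i)].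

Lemma visitedP q i : reflect (exists2 t, t <= K & run D w t = Some (q, i)) (visited q i).
Proof.
apply: (iffP existsP) => [[t /eqP run_t]|[t le_tK run_t]].
  by exists t; first by rewrite -ltnS.
by exists (Ordinal (le_tK : t < K.+1)); apply/eqP.
Qed.

Lemma visited_next q i : visited q i -> i <= size w ->
  exists s r, [/\ tape w i = Some s, delta D q s = Some (r, P r)
                & visited r (if P r then i.+1 else i.-1)].
Proof.
move=> /visitedP[t le_tK run_t] le_iw.
have lt_tK : t < K.
  rewrite ltn_neqAle le_tK andbT; apply: contraTneq le_iw => eq_tK.
  by move: run_t; rewrite eq_tK run_K => -[_ <-]; rewrite ltnn.
have [[r j] run_t1] := run_defined run_K lt_tK.
move: (run_t1); rewrite /= run_t /= => /stepP[s tape_i [dq ej _]].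
by exists s, r; split=> //; apply/visitedP; exists t.+1; rewrite -?ej.
Qed.

Lemma visited_prev r j : visited r j -> (0 < j) || ~~ P r ->
  exists s sy, [/\ visited s (if P r then j.-1 else j.+1),
                   tape w (if P r then j.-1 else j.+1) = Some sy
                 & delta D s sy = Some (r, P r)].
Proof.
move=> /visitedP[[|t] le_tK run_t] not_init.
  by move: run_t not_init => /= -[<- <-]; rewrite P_init.
have [s [i [run_s /stepP[sy tape_i [dq ej le_i]]]]] := run_pred run_t.
have -> : (if P r then j.-1 else j.+1) = i.
  by rewrite ej; case: (P r) le_i => //= /prednK.
by exists s, sy; split=> //; apply/visitedP; exists t => //; apply: ltnW.
Qed.

Lemma visited_end q : visited q (size w).+1 -> delta D q REnd = None -> q = f.
Proof.
move=> /visitedP[t le_tK run_t] no_move; case: (ltnP t K) => [lt_tK | le_Kt].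
  have [c] := run_defined run_K lt_tK.
  by rewrite /= run_t /= /step /tape eqxx /= no_move.
by move: run_t; rewrite (@anti_leq t K) ?le_tK ?le_Kt // run_K => -[].
Qed.

(* Take the first step that carries the head beyond cell i: the state s it leaves
   cell i in cannot have been entered by a left move, from beyond cell i. *)
Lemma first_crossing i : i <= size w ->
  exists s r sy, [/\ tape w i = Some sy, visited s i, P s,
                     delta D s sy = Some (r, true) & visited r i.+1].
Proof.
move=> le_iw.
pose beyond t := (t <= K) && (if run D w t is Some (_, j) then i < j else false).
have [|t1 /andP[le_t1K beyond_t1] t1_min] := ex_minnP (P := beyond).
  by exists K; rewrite /beyond leqnn run_K ltnS.
case run_t1: (run D w t1) beyond_t1 => [[r j]|] // lt_ij.
case: t1 run_t1 le_t1K t1_min => [|t] run_t1 le_t1K t1_min.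
  by move: run_t1 lt_ij => /= -[_ <-].
have [s [i' [run_t /stepP[sy tape_i' [ds ej _]]]]] := run_pred run_t1.
have le_tK : t <= K by apply: ltnW.
have le_i'i : i' <= i.
  rewrite leqNgt; apply/negP => lt_ii'; have := t1_min t.
  by rewrite /beyond le_tK run_t lt_ii' ltnn => /(_ isT).
have Pr : P r by move: ej lt_ij; case: (P r) => // ->; lia.
have ei' : i' = i by move: ej lt_ij; rewrite Pr => ->; lia.
rewrite Pr ei' in ds tape_i' run_t ej.
exists s, r, sy; split=> //.
- by apply/visitedP; exists t.
- apply/negPn/negP => not_Ps.
  case: t run_t le_tK t1_min {run_t1 le_t1K} => [|t] run_t le_tK t1_min.
    by move: run_t not_Ps => /= -[<- _]; rewrite P_init.
  have [s' [i'' [run_t' /stepP[_ _ [_ ei'' i''_gt0]]]]] := run_pred run_t.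
  move: ei'' i''_gt0; rewrite (negbTE not_Ps) /= => ei'' i''_gt0.
  have lt_ii'' : i < i'' by rewrite ei'' ltn_predL.
  have := t1_min t; rewrite /beyond run_t' lt_ii'' andbT.
  by move=> /(_ (leq_trans (leqnSn t) le_tK)); rewrite ltnNge leqW.
- by apply/visitedP; exists t.+1; rewrite // -ej.
Qed.

End AcceptingRun.

(** * The automaton *)

Section Automaton.
Variable n : nat.
Hypothesis n_gt0 : 0 < n.

Local Notation top := (top n_gt0).
Local Notation size_plus_out_middle := (size_plus_out_middle n_gt0).
Local Notation size_minus_in_lt := (size_minus_in_lt n_gt0).
Local Notation size_plus_out_gt0 := (size_plus_out_gt0 n_gt0).
Local Notation letter := ({set 'I_n} * {set 'I_n})%type.

Definition letter_delta (T T' : {set 'I_n}) (q : 'I_n) : option ('I_n * bool) :=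
  let A := plus_out T in let B := minus_in T in
  let A' := plus_out T' in let B' := minus_in T' in
  if q \in A then
    if index q A < size B then Some (nth q B (index q A), false)
    else Some (head q A', true)
  else if q \in B' then Some (nth q A' (index q B').+1, true)
  else None.

Variant letter_step (T T' : {set 'I_n}) : 'I_n -> 'I_n -> bool -> Prop :=
  | StepBack j of j < size (minus_in T) :
      letter_step T T' (nth top (plus_out T) j) (nth top (minus_in T) j) false
  | StepOver :
      letter_step T T' (nth top (plus_out T) (size (minus_in T))) (head top (plus_out T')) true
  | StepForth j of j < size (minus_in T') :
      letter_step T T' (nth top (minus_in T') j) (nth top (plus_out T') j.+1) true.

Section LetterStep.
Variables T T' : {set 'I_n}.
Hypotheses (mT : middle T) (mT' : middle T').

Local Notation A := (plus_out T).
Local Notation B := (minus_in T).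
Local Notation A' := (plus_out T').
Local Notation B' := (minus_in T').

Lemma letter_deltaP q r d : letter_delta T T' q = Some (r, d) <-> letter_step T T' q r d.
Proof.
have head_A' x : head x A' = head top A' by case: (A') (size_plus_out_gt0 mT').
split.
  rewrite /letter_delta; case: ifP => [qA | _].
    have [j lt_jA ->] : exists2 j, j < size A & q = nth top A j.
      by exists (index q A); rewrite ?index_mem ?nth_index.
    rewrite index_uniq ?uniq_plus_states //.
    case: ltnP => [lt_jB | le_Bj] [<- <-].
      by rewrite (set_nth_default top) //; constructor.
    have -> : j = size B.
      by apply/eqP; rewrite eqn_leq le_Bj andbT -ltnS -(size_plus_out_middle mT).
    by rewrite head_A'; constructor.
  case: ifP => // qB'.
  have [j lt_jB' ->] : exists2 j, j < size B' & q = nth top B' j.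
    by exists (index q B'); rewrite ?index_mem ?nth_index.
  rewrite index_uniq ?uniq_minus_states // => -[<- <-].
  by rewrite (set_nth_default top) ?size_plus_out_middle //; constructor.
case=> [j lt_jB | | j lt_jB'].
- have lt_jA : j < size A := ltn_trans lt_jB (size_minus_in_lt mT).
  rewrite /letter_delta mem_nth // index_uniq ?uniq_plus_states // lt_jB.
  by rewrite (set_nth_default top).
- have lt_BA := size_minus_in_lt mT.
  rewrite /letter_delta mem_nth // index_uniq ?uniq_plus_states //.
  by rewrite ltnn head_A'.
- have qB' : nth top B' j \in B' by rewrite mem_nth.
  have nqA : nth top B' j \notin A.
    by move: qB'; rewrite mem_minus_states mem_plus_states => /andP[/negbTE ->].
  rewrite /letter_delta (negbTE nqA) qB' index_uniq ?uniq_minus_states //.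
  by rewrite (set_nth_default top) ?size_plus_out_middle.
Qed.

Lemma letter_step_det q r d r' d' :
  letter_step T T' q r d -> letter_step T T' q r' d' -> r = r' /\ d = d'.
Proof. by move=> /letter_deltaP step_r /letter_deltaP; rewrite step_r => -[-> ->]. Qed.

Lemma letter_step_dir q r d : letter_step T T' q r d -> qplus r = d.
Proof.
case=> [j lt_jB | | j lt_jB'].
- by have := mem_nth top lt_jB; rewrite mem_minus_states => /andP[/negbTE].
- have : head top A' \in A'.
    by case: (A') (size_plus_out_gt0 mT') => //= a A1 _; rewrite mem_head.
  by rewrite mem_plus_states => /andP[].
- have := @mem_nth _ top A' j.+1; rewrite size_plus_out_middle // ltnS => /(_ lt_jB').
  by rewrite mem_plus_states => /andP[].
Qed.

Lemma letter_step_back s x : letter_step T T' s x false ->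
  exists2 j, j < size B & s = nth top A j /\ x = nth top B j.
Proof. by move eb: false => b st; case: s x b / st eb => // j lt_jB _; exists j. Qed.

Lemma letter_step_forth s x : letter_step T T' s x true ->
  s = nth top A (size B) /\ x = head top A' \/
  exists2 j, j < size B' & s = nth top B' j /\ x = nth top A' j.+1.
Proof.
by move eb: true => b st; case: s x b / st eb => // [_ | j lt_jB' _]; [left | right; exists j].
Qed.

Lemma letter_step_src_plus q r d : letter_step T T' q r d -> qplus q -> q \in A.
Proof.
case=> [j lt_jB | | j lt_jB'] qq.
- by rewrite mem_nth // (ltn_trans lt_jB (size_minus_in_lt mT)).
- by rewrite mem_nth // size_minus_in_lt.
- by move: qq (mem_nth top lt_jB'); rewrite mem_minus_states => ->.
Qed.

Lemma letter_step_src_minus q r d : letter_step T T' q r d -> ~~ qplus q -> q \in B'.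
Proof.
case=> [j lt_jB | | j lt_jB'] nqq; last by rewrite mem_nth.
- have := mem_nth top (ltn_trans lt_jB (size_minus_in_lt mT)).
  by rewrite mem_plus_states (negbTE nqq).
- by have := mem_nth top (size_minus_in_lt mT); rewrite mem_plus_states (negbTE nqq).
Qed.

End LetterStep.

Definition good_letter (T T' : {set 'I_n}) : bool :=
  [&& middle T, middle T' & rank (key T') <= (rank (key T)).+1].

Definition start : 'I_n := head top (plus_out (middle_of_rank n 0)).

Definition aut_delta (q : 'I_n) (c : sym letter) : option ('I_n * bool) :=
  match c with
  | LEnd => if q == start then Some (start, true) else None
  | REnd => None
  | Letter (T, T') => if good_letter T T' then letter_delta T T' q else None
  end.

Definition aut : dfa2 letter 'I_n := DFA2 start aut_delta (pred1 top).

Lemma qplus_start : qplus start.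
Proof.
rewrite /start; case eA: (plus_out _) => [|a A] /=; first exact: qplus_top.
by have := mem_head a A; rewrite -eA mem_plus_states => /andP[].
Qed.

Lemma aut_dir q c r d : delta aut q c = Some (r, d) -> qplus r = d.
Proof.
case: c => [| | [T T']] /=.
- by case: eqP => // _ [<- <-]; apply: qplus_start.
- by [].
by case: ifP => // /and3P[mT mT' _] /letter_deltaP; move=> /(_ mT mT') /letter_step_dir; apply.
Qed.

End Automaton.

(** * Accepted words are long *)

Section LowerBound.
Variable n : nat.
Hypothesis n_gt0 : 0 < n.

Local Notation top := (top n_gt0).
Local Notation start := (start n_gt0).
Local Notation aut := (aut n_gt0).
Local Notation size_plus_out_middle := (size_plus_out_middle n_gt0).
Local Notation letter := ({set 'I_n} * {set 'I_n})%type.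
Local Notation letter_deltaP := (letter_deltaP n_gt0).
Local Notation size_minus_in_lt := (size_minus_in_lt n_gt0).

Lemma rank_start : rank [:: start] = 0.
Proof.
have [mT0 rank0] := middle_of_rankP n_gt0 (binomial_half_gt0 n_gt0).
apply/eqP; rewrite -leqn0 -rank0; apply: rank_le.
move: (size_plus_out_middle mT0); rewrite /start /key.
by case: (plus_out _) => [|a A] //= _; case: (minus_in _) => [|b B]; rewrite lexi_cons lexx.
Qed.

Variables (w : seq letter) (K : nat).
Hypothesis run_K : run aut w K = Some (top, (size w).+1).

Local Notation visited := (visited aut w K).
Local Notation visited_next := (visited_next (@aut_dir _ n_gt0) run_K).
Local Notation visited_prev :=
  (visited_prev (@aut_dir _ n_gt0) (qplus_start n_gt0) (w := w) (K := K)).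
Local Notation first_crossing :=
  (first_crossing (@aut_dir _ n_gt0) (qplus_start n_gt0) run_K).

Definition crossing_key (i : nat) : seq 'I_n :=
  interleave (plus_states (visited^~ i.+1)) (minus_states (visited^~ i)).

Lemma crossing_key0 : crossing_key 0 = [:: start].
Proof.
rewrite /crossing_key (@plus_states_pred1 _ start) ?minus_states_pred0 ?qplus_start //.
  move=> x nqx; apply/negbTE/negP => /visited_next[] // s [r [/= [<-] /=]].
  by case: eqP nqx => // -> /negP; rewrite qplus_start.
move=> x qx; apply/idP/eqP => [/visited_prev | ->].
  by rewrite qx => -[] // s [sy [_ /= [<-] /=]]; case: eqP => // _ [<-].
apply/visitedP; exists 1; last by rewrite /= /step /= eqxx.
by case: K run_K => // -[].
Qed.

Lemma crossing_key_last : crossing_key (size w) = [:: top].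
Proof.
rewrite /crossing_key (@plus_states_pred1 _ top) ?minus_states_pred0 ?qplus_top //.
  move=> x nqx; apply/negbTE/negP => /visited_prev; rewrite nqx orbT (negbTE nqx) /tape eqxx.
  by case=> // s [sy [_ /= [<-]]].
move=> x qx; apply/idP/eqP => [/visited_end | ->]; first by apply.
by apply/visitedP; exists K.
Qed.

Section CrossingStep.
Variables (j : nat) (T T' : {set 'I_n}).
Hypotheses (lt_jw : j < size w) (tape_j : tape w j.+1 = Some (Letter (T, T'))).

Local Notation A := (plus_out T).
Local Notation B := (minus_in T).
Local Notation A' := (plus_out T').
Local Notation B' := (minus_in T').

Lemma crossing_letter_good : good_letter T T'.
Proof.
have [s [r [sy [tape_sy _ _ ds _]]]] := first_crossing lt_jw.
by move: ds; rewrite tape_j in tape_sy; case: tape_sy => <- /=; case: ifP.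
Qed.

Let mT : middle T. Proof. by case/and3P: crossing_letter_good. Qed.
Let mT' : middle T'. Proof. by case/and3P: crossing_letter_good. Qed.

Lemma cell_delta q sy r d :
  tape w j.+1 = Some sy -> delta aut q sy = Some (r, d) -> letter_step n_gt0 T T' q r d.
Proof.
by rewrite tape_j => -[<-] /=; rewrite crossing_letter_good => /(letter_deltaP mT mT').
Qed.

Lemma cell_next q : visited q j.+1 ->
  exists2 r, letter_step n_gt0 T T' q r (qplus r) & visited r (if qplus r then j.+2 else j).
Proof.
by move=> /visited_next[] // s [r [tape_s /(cell_delta tape_s) step_q vis_r]]; exists r.
Qed.

Lemma cell_prev_back x : ~~ qplus x -> visited x j ->
  exists2 s, visited s j.+1 & letter_step n_gt0 T T' s x false.
Proof.
move=> nqx /visited_prev; rewrite nqx orbT (negbTE nqx) => -[] // s [sy [vis_s tape_s]].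
by move=> /(cell_delta tape_s) step_s; exists s.
Qed.

Lemma cell_prev_forth x : qplus x -> visited x j.+2 ->
  exists2 s, visited s j.+1 & letter_step n_gt0 T T' s x true.
Proof.
move=> qx /visited_prev; rewrite qx /= => -[] // s [sy [vis_s tape_s]].
by move=> /(cell_delta tape_s) step_s; exists s.
Qed.

Lemma cell_over : visited (nth top A (size B)) j.+1 /\ visited (head top A') j.+2.
Proof.
have [s [r [sy [tape_s vis_s qs /(cell_delta tape_s) step_s vis_r]]]] := first_crossing lt_jw.
case/letter_step_forth: step_s => [[<- <-] // | [k lt_kB' [s_eq _]]].
by move: qs (mem_nth top lt_kB'); rewrite -s_eq mem_minus_states => ->.
Qed.

Lemma visited_back_pair k : k < size B ->
  visited (nth top A k) j.+1 = visited (nth top B k) j.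
Proof.
move=> lt_kB; have step_k := @StepBack n n_gt0 T T' k lt_kB.
apply/idP/idP => [/cell_next[r step_r] | vis_b].
  by have [<- <-] := letter_step_det mT mT' step_k step_r.
have nqb : ~~ qplus (nth top B k) by rewrite (letter_step_dir mT' step_k).
have [s vis_s /letter_step_back[k' lt_k'B [eq_s eq_b]]] := cell_prev_back nqb vis_b.
have eq_kk' : k = k'.
  by apply/eqP; rewrite -(nth_uniq top lt_kB lt_k'B (uniq_minus_states _)) eq_b.
by rewrite eq_kk' -eq_s.
Qed.

Lemma visited_forth_pair k : k < size B' ->
  visited (nth top A' k.+1) j.+2 = visited (nth top B' k) j.+1.
Proof.
move=> lt_kB'; have step_k := @StepForth n n_gt0 T T' k lt_kB'.
have lt_kA' : k.+1 < size A' by rewrite size_plus_out_middle.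
apply/idP/idP => [vis_a | /cell_next[r step_r]]; last first.
  by have [<- <-] := letter_step_det mT mT' step_k step_r.
have qa : qplus (nth top A' k.+1) by rewrite (letter_step_dir mT' step_k).
have [s vis_s /letter_step_forth] := cell_prev_forth qa vis_a.
case=> [[_ eq_a] | [k' lt_k'B' [eq_s eq_a]]].
  have := nth_uniq top lt_kA' (ltn_trans (ltn0Sn k) lt_kA') (uniq_plus_states _).
  by rewrite nth0 -eq_a eqxx.
have lt_k'A' : k'.+1 < size A' by rewrite size_plus_out_middle.
have eq_kk' : k = k'.
  by apply/eqP; rewrite -eqSS -(nth_uniq top lt_kA' lt_k'A' (uniq_plus_states _)) eq_a.
by rewrite eq_kk' -eq_s.
Qed.

Lemma crossing_key_left : (key T <= crossing_key j)%O.
Proof.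
have plusE : plus_states (visited^~ j.+1) = filter (visited^~ j.+1) A.
  apply: plus_states_filter => x qx /cell_next[r /letter_step_src_plus step_x _].
  exact: step_x.
have minusE : minus_states (visited^~ j) = filter (visited^~ j) B.
  apply: minus_states_filter => x nqx /(cell_prev_back nqx)[s _].
  by case/letter_step_back=> // k lt_kB [_ ->]; apply: mem_nth.
have pairs : map (visited^~ j.+1) A = rcons (map (visited^~ j) B) true.
  apply: (@eq_from_nth _ false); first by rewrite size_rcons !size_map size_plus_out_middle.
  move=> k; rewrite size_map size_plus_out_middle // ltnS leq_eqVlt => /orP[/eqP-> | lt_kB].
    rewrite nth_rcons size_map ltnn eqxx (nth_map top) ?(size_minus_in_lt mT) //.
    exact: (proj1 cell_over).
  have lt_kA : k < size A := ltn_trans lt_kB (size_minus_in_lt mT).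
  by rewrite nth_rcons size_map lt_kB !(nth_map top) // visited_back_pair.
rewrite /crossing_key plusE minusE !filter_mask pairs.
apply: interleave_le_mask_pairs; rewrite ?size_map ?size_plus_out_middle //.
  exact: sorted_plus_states.
exact: sorted_minus_states.
Qed.

Lemma crossing_key_right : (crossing_key j.+1 <= key T')%O.
Proof.
have plusE : plus_states (visited^~ j.+2) = filter (visited^~ j.+2) A'.
  apply: plus_states_filter => x qx /(cell_prev_forth qx)[s _].
  case/letter_step_forth => [[_ ->] | [k lt_kB' [_ ->]]]; last first.
    by apply: mem_nth; rewrite size_plus_out_middle.
  by rewrite -nth0 mem_nth // size_plus_out_middle.
have minusE : minus_states (visited^~ j.+1) = filter (visited^~ j.+1) B'.
  apply: minus_states_filter => x nqx /cell_next[r /letter_step_src_minus step_x _].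
  exact: step_x.
have sorted_A' : sorted <%O A' := sorted_plus_states _.
move: (size_plus_out_middle mT') sorted_A' visited_forth_pair cell_over.
rewrite /key /crossing_key plusE minusE; case: (plus_out T') => // a' A1 [size_A1] sorted_A'.
move=> pair [_ /= vis_a']; rewrite vis_a' !filter_mask.
have -> : map (visited^~ j.+2) A1 = map (visited^~ j.+1) B'.
  apply: (@eq_from_nth _ false) => [|k]; rewrite !size_map size_A1 // => lt_kB'.
  by rewrite !(nth_map top) ?size_A1 // -pair.
apply: interleave_mask_pairs_le; rewrite ?size_map //; exact: sorted_minus_states.
Qed.

Lemma rank_crossing_key_step : rank (crossing_key j.+1) <= (rank (crossing_key j)).+1.
Proof.
case/and3P: crossing_letter_good => _ _ rank_T'.
apply: leq_trans (rank_le crossing_key_right) (leq_trans rank_T' _).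
by rewrite ltnS rank_le ?crossing_key_left.
Qed.

End CrossingStep.

Lemma rank_crossing_key i : i <= size w -> rank (crossing_key i) <= i.
Proof.
elim: i => [|i IH] lt_iw; first by rewrite crossing_key0 rank_start.
have := tape_nth (set0, set0) lt_iw; case: (nth _ w i) => T T' tape_i.
by apply: leq_trans (rank_crossing_key_step lt_iw tape_i) _; rewrite ltnS IH // ltnW.
Qed.

Lemma accepted_size_ge : 'C(n, n./2).-1 <= size w.
Proof.
apply: leq_trans (rank_top n_gt0) _.
by rewrite -crossing_key_last rank_crossing_key.
Qed.

End LowerBound.

(** * A shortest accepted word *)

Section Witness.
Variable n : nat.
Hypothesis n_gt0 : 0 < n.

Local Notation top := (top n_gt0).
Local Notation aut := (aut n_gt0).
Local Notation letter_deltaP := (letter_deltaP n_gt0).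
Local Notation middle_of_rankP := (middle_of_rankP n_gt0).
Local Notation T_ := (middle_of_rank n).
Local Notation last_rank := 'C(n, n./2).-1.

Definition witness : seq ({set 'I_n} * {set 'I_n}) :=
  [seq (T_ j, T_ j.+1) | j <- iota 0 last_rank].

Lemma size_witness : size witness = last_rank.
Proof. by rewrite size_map size_iota. Qed.

Lemma rank_lt_binomial j : j <= last_rank -> j < 'C(n, n./2).
Proof. by rewrite -ltnS prednK // binomial_half_gt0. Qed.

Lemma tape_witness j : j < last_rank -> tape witness j.+1 = Some (Letter (T_ j, T_ j.+1)).
Proof.
move=> lt_j; rewrite (tape_nth (set0, set0)) ?size_witness //.
by rewrite (nth_map 0) ?size_iota // nth_iota.
Qed.

Lemma good_witness j : j < last_rank -> good_letter (T_ j) (T_ j.+1).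
Proof.
move=> lt_j; have [m_j r_j] := middle_of_rankP (rank_lt_binomial (ltnW lt_j)).
have [m_j1 r_j1] := middle_of_rankP (rank_lt_binomial lt_j).
by rewrite /good_letter m_j m_j1 r_j r_j1 /=.
Qed.

Lemma witness_step j q r d : j < last_rank -> letter_step n_gt0 (T_ j) (T_ j.+1) q r d ->
  step aut witness (q, j.+1) = Some (r, if d then j.+2 else j).
Proof.
move=> lt_j step_q; have good := good_witness lt_j; case/and3P: (good) => m_j m_j1 _.
by rewrite /step tape_witness //= good (proj2 (letter_deltaP m_j m_j1 _ _ _) step_q); case: (d).
Qed.

Lemma witness_zigzag j t k : j < last_rank -> k <= size (minus_in (T_ j)) ->
  run aut witness t = Some (nth top (plus_out (T_ j)) 0, j.+1) ->
  exists t', run aut witness t' = Some (nth top (plus_out (T_ j)) k, j.+1).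
Proof.
move=> lt_j; elim: k => [|k IH] le_kB run_t; first by exists t.
have [t' run_t'] := IH (ltnW le_kB) run_t.
have run_back : run aut witness t'.+1 = Some (nth top (minus_in (T_ j)) k, j).
  by rewrite (run_succ run_t') (witness_step lt_j (@StepBack _ _ _ _ _ le_kB)).
case: j lt_j le_kB run_back {IH run_t run_t'} => [|j] lt_j le_kB run_back.
  have [m0 r0] := middle_of_rankP (binomial_half_gt0 n_gt0).
  by rewrite (minus_in_rank0 n_gt0 m0 r0) in le_kB.
exists t'.+2.
by rewrite (run_succ run_back) (witness_step (ltnW lt_j) (@StepForth _ _ _ _ _ le_kB)).
Qed.

Lemma witness_run j : j <= last_rank ->
  exists t, run aut witness t = Some (head top (plus_out (T_ j)), j.+1).
Proof.
elim: j => [|j IH] le_j; first by exists 1; rewrite /= /step /= eqxx.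
have lt_j : j < last_rank := le_j.
have [t run_t] := IH (ltnW le_j).
have run_t0 : run aut witness t = Some (nth top (plus_out (T_ j)) 0, j.+1) by rewrite nth0.
have [t' run_t'] := witness_zigzag lt_j (leqnn _) run_t0.
by exists t'.+1; rewrite (run_succ run_t') (witness_step lt_j (@StepOver _ _ _ _)).
Qed.

Lemma middle_of_rank_last : T_ last_rank = Qplus n :\ top.
Proof.
have [m_last r_last] := middle_of_rankP (rank_lt_binomial (leqnn _)).
have m_top := middle_Qplus_del n_gt0 (qplus_top n_gt0).
apply: (rank_key_inj n_gt0 m_last m_top); apply/eqP; rewrite r_last eqn_leq.
have := rank_key_lt m_top; rewrite -{1}(prednK (binomial_half_gt0 n_gt0)) ltnS => ->.
by rewrite key_Qplus_del ?qplus_top // rank_top.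
Qed.

Lemma witness_accepted : accepts aut witness.
Proof.
have [t run_t] := witness_run (leqnn _).
exists t, top; split; last by rewrite inE.
by rewrite run_t size_witness middle_of_rank_last plus_out_Qplus_del ?qplus_top.
Qed.

End Witness.

Theorem mainTheorem2 (n : nat) (hn : 2 <= n) :
  exists (Sigma : finType) (A : dfa2 Sigma 'I_n),
    direction_determinate A /\
    (exists w, accepts A w) /\
    (exists w, accepts A w /\ size w = 'C(n, n./2) - 1) /\
    (forall w, accepts A w -> 'C(n, n./2) - 1 <= size w).
Proof.
have n_gt0 : 0 < n by apply: leq_trans hn.
have last_rank : 'C(n, n./2) - 1 = 'C(n, n./2).-1 := subn1 _.
exists ({set 'I_n} * {set 'I_n})%type, (aut n_gt0); split.
  by exists (@qplus n) => q c r d; apply: aut_dir.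
split; first by exists (witness n); apply: witness_accepted.
split.
  by exists (witness n); rewrite size_witness last_rank; split=> //; apply: witness_accepted.
move=> w [k [q [run_k /eqP eq_q]]]; rewrite last_rank.
by apply: (accepted_size_ge (K := k)); rewrite run_k eq_q.
Qed.
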